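(* Let $(x,y)$ be a random pair with values in $\mathcal{X}\times\{-1,+1\}$ with distribution $P$. Let $\Theta=\{\theta^{(1)},\dots,\theta^{(m)}\}$ be a finite set of hyperparameter values and, for each $k\in[m]$, let $f_{\theta^{(k)}}:\mathcal{X}\times\mathbb{R}\to\mathbb{R}$ satisfy the scalable-classifier assumption. Fix $\varepsilon,\delta\in(0,1)$ and an integer $r\ge1$. Let $\mathcal{Z}_c$ be $n_c\ge r$ i.i.d. samples from $P$, and let $\{\tilde x^U_j\}_{j=1}^{n_U}$ be the feature vectors of all samples in $\mathcal{Z}_c$ with label $-1$. For each $k\in[m]$ and $j\in[n_U]$ let $\bar\rho^{(k)}_j$ be the unique real with $f_{\theta^{(k)}}(\tilde x^U_j,\bar\rho^{(k)}_j)=0$; when $n_U\ge r$ set $\rho^{(k)}_\varepsilon=\max^{(r)}(\{\bar\rho^{(k)}_j\}_{j=1}^{n_U})$ and $\mathcal{S}^{(k)}_\varepsilon=\{x\in\mathcal{X}: f_{\theta^{(k)}}(x,\rho^{(k)}_\varepsilon)<0\}$, and set $\mathcal{S}^{(k)}_\varepsilon=\mathcal{X}$ if $n_U<r$. Then for every $k\in[m]$, $$\Pr_{\mathcal{Z}_c}\Big\{\Pr_{(x,y)\sim P}\{y=-1\ \text{and}\ x\in\mathcal{S}^{(k)}_\varepsilon\}\le\varepsilon\Big\}\ge 1-m\,\mathbf{B}(r-1;n_c,\varepsilon),$$ where $(x,y)$ is independent of $\mathcal{Z}_c$.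
   Context: Scalable-classifier assumption for $f_\theta$: for every $x\in\mathcal{X}$, the map $\rho\mapsto f_\theta(x,\rho)$ is continuous and strictly increasing, and $\lim_{\rho\to-\infty}f_\theta(x,\rho)<0<\lim_{\rho\to+\infty}f_\theta(x,\rho)$. $[m]=\{1,\dots,m\}$. Binomial CDF: $\mathbf{B}(k;n,\varepsilon)=\sum_{i=0}^{k}\binom{n}{i}\varepsilon^i(1-\varepsilon)^{n-i}$. Generalized max: for a finite collection $\Gamma=\{\gamma_i\}_{i=1}^n$ of reals and integer $r\in\{1,\dots,n\}$, order it as $\gamma_{(1)}\ge\dots\ge\gamma_{(n)}$ and set $\max^{(r)}(\Gamma)=\gamma_{(r)}$. *)

From HB Require Import structures.
From mathcomp Require Import all_boot all_order all_algebra.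
From mathcomp Require Import all_classical all_reals all_analysis.
Set Implicit Arguments. Unset Strict Implicit. Unset Printing Implicit Defensive.
Import Order.TTheory GRing.Theory Num.Theory.
Import numFieldNormedType.Exports.
Local Open Scope ring_scope.
Local Open Scope classical_set_scope.

(* Labels: [true] stands for +1, [false] stands for -1. *)

Definition scalable_classifier (R : realType) (X : Type) (g : X -> R -> R) : Prop :=
  forall x : X,
    continuous (g x) /\
    {homo g x : a b / a < b} /\
    (lim ((g x rho)%:E @[rho --> -oo%R]) < 0)%E /\
    (0 < lim ((g x rho)%:E @[rho --> +oo%R]))%E.

Definition rhobar (R : realType) (X : Type) (g : X -> R -> R) (x : X) : R :=
  xget 0 [set rho | g x rho = 0].

Definition binomCDF (R : realType) (k n : nat) (eps : R) : R :=
  \sum_(i < k.+1) ('C(n, i))%:R * eps ^+ i * (1 - eps) ^+ (n - i).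

Definition genmax (R : realType) (r : nat) (s : seq R) : R :=
  nth 0 (sort (fun a b => b <= a) s) r.-1.

Definition neg_features (X : Type) (n : nat) (z : 'I_n -> X * bool) : seq X :=
  [seq (z i).1 | i <- enum 'I_n & ~~ (z i).2].

Definition S_eps (R : realType) (X : Type) (g : X -> R -> R) (r n : nat)
  (z : 'I_n -> X * bool) : set X :=
  let s := neg_features z in
  if (r <= size s)%N then [set x | g x (genmax r [seq rhobar g xu | xu <- s]) < 0]
  else setT.

Definition iid_with_law (R : realType) (dO dZ : measure_display)
  (Omega : measurableType dO) (Zt : measurableType dZ)
  (Q : probability Omega R) (P : probability Zt R) (n : nat)
  (Z : 'I_n -> Omega -> Zt) : Prop :=
  (forall i, measurable_fun setT (Z i)) /\
  (forall i A, measurable A -> Q (Z i @^-1` A) = P A) /\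
  (forall A : 'I_n -> set Zt, (forall i, measurable (A i)) ->
     Q (\bigcap_(i in [set: 'I_n]) (Z i @^-1` A i)) = (\prod_(i < n) Q (Z i @^-1` A i))%E).

From HB Require Import structures.
From mathcomp Require Import all_boot all_order all_algebra.
From mathcomp Require Import all_classical all_reals all_analysis.
From mathcomp Require Import ring lra.
Import Order.TTheory GRing.Theory Num.Theory.
Import numFieldNormedType.Exports.
Local Open Scope ring_scope.
Local Open Scope classical_set_scope.

(* For a fixed classifier, [f x rho < 0] iff [rho < rhobar x], so the risk of the threshold
   [rho] on the negative class is [F rho := P (y = -1 /\ rho < rhobar x)], a nonincreasing,
   right-continuous function of [rho].  If [P (y = -1) <= eps] every threshold is good.
   Otherwise there is a least [c] with [F c <= eps], and the event [y = -1 /\ c <= rhobar x]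
   has probability [p >= eps].  The empirical threshold, the [r]-th largest score among the
   negative samples, is good exactly when at least [r] of the [nc] samples fall in that event;
   this count is Binomial([nc], [p]), so the failure probability is
   [B (r - 1; nc, p) <= B (r - 1; nc, eps) <= m B (r - 1; nc, eps)]. *)

Set Implicit Arguments.
Unset Strict Implicit.

Section binomial_law.
Variable R : realDomainType.
Implicit Types p q : R.

Definition binom_pmf p (n i : nat) : R := ('C(n, i))%:R * p ^+ i * (1 - p) ^+ (n - i).

Definition binom_lt p (n k : nat) : R := \sum_(i < k) binom_pmf p n i.

Lemma binom_pmf_ge0 p n i : 0 <= p <= 1 -> 0 <= binom_pmf p n i.
Proof.
case/andP=> p0 p1; rewrite /binom_pmf.
by rewrite !mulr_ge0 ?exprn_ge0 ?subr_ge0.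
Qed.

Lemma binom_pmfS0 p n : binom_pmf p n.+1 0 = (1 - p) * binom_pmf p n 0.
Proof. by rewrite /binom_pmf !bin0 !subn0 exprS; ring. Qed.

Lemma binom_pmfSS p n i :
  binom_pmf p n.+1 i.+1 = (1 - p) * binom_pmf p n i.+1 + p * binom_pmf p n i.
Proof.
rewrite /binom_pmf binS natrD subSS mulrDl mulrDl.
have [lt_in|le_ni] := ltnP i n; first by rewrite -[(n - i)%N]subnSK // !exprS; ring.
by rewrite bin_small ?ltnS // !mul0r mulr0 !add0r exprS; ring.
Qed.

Lemma binom_ltS p n k : binom_lt p n k.+1 = binom_lt p n k + binom_pmf p n k.
Proof. by rewrite /binom_lt big_ord_recr. Qed.

Lemma binom_ltSS p n k :
  binom_lt p n.+1 k.+1 = (1 - p) * binom_lt p n k.+1 + p * binom_lt p n k.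
Proof.
elim: k => [|k IHk]; first by rewrite /binom_lt !big_ord1 big_ord0 binom_pmfS0; ring.
by rewrite binom_ltS IHk binom_pmfSS !(binom_ltS p n k.+1) binom_ltS; ring.
Qed.

(* [binom_ltSS] mixes [binom_lt p n k.+1] and the smaller [binom_lt p n k] with weights
   [1 - p] and [p], so raising [p] shifts weight to the smaller one. *)
Lemma binom_lt_anti p q n k : 0 <= q -> q <= p -> p <= 1 -> binom_lt p n k <= binom_lt q n k.
Proof.
move=> q0 qp p1; elim: n k => [|n IHn] k.
  suff -> : binom_lt p 0 k = binom_lt q 0 k by [].
  apply: eq_bigr => -[[|i] lt_ik] _ //.
  by rewrite /binom_pmf bin_small // !mul0r.
case: k => [|k]; first by rewrite /binom_lt !big_ord0.
rewrite !binom_ltSS.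
have := IHn k.+1; have := IHn k.
have : binom_lt q n k <= binom_lt q n k.+1.
  by rewrite binom_ltS lerDl binom_pmf_ge0 // q0 (le_trans qp p1).
nra.
Qed.

Lemma sum_card_lt_binom (n k : nat) p :
  \sum_(I : {set 'I_n} | (#|I| < k)%N) p ^+ #|I| * (1 - p) ^+ (n - #|I|) = binom_lt p n k.
Proof.
case: k => [|k]; first by rewrite /binom_lt big_ord0 big_pred0.
rewrite (partition_big (fun I : {set 'I_n} => (inord #|I| : 'I_k.+1)) xpredT) //=.
apply: eq_bigr => j _.
rewrite (eq_bigl (fun I : {set 'I_n} => #|I| == j)); last first.
  move=> I /=; apply/andP/eqP => [[lt_Ik /eqP <-]|cardI]; first by rewrite inordK.
  split; first by rewrite cardI ltn_ord.
  by apply/eqP/val_inj; rewrite /= inordK // cardI.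
rewrite (eq_bigr (fun _ => p ^+ j * (1 - p) ^+ (n - j))); last by move=> I /eqP ->.
by rewrite sumr_const -cardsE card_draws card_ord -mulr_natl /binom_pmf mulrA.
Qed.

End binomial_law.

Lemma binomCDF_binom_lt (R : realType) (k n : nat) (p : R) :
  binomCDF k n p = binom_lt p n k.+1.
Proof. by []. Qed.

Lemma le_nth_sorted_ge (R : realDomainType) (c : R) (t : seq R) i :
  sorted >=%R t -> (i < size t)%N -> (c <= nth 0 t i) = (i < count (>= c) t)%N.
Proof.
elim: t i => [//|a t IHt] i /= sorted_at lt_it.
have ge_trans : transitive (>=%R : rel R) by move=> y x z xy yz; exact: le_trans yz xy.
have /allP le_a := order_path_min ge_trans sorted_at.
have [le_ca|lt_ac] := leP c a.
  by case: i lt_it => [|i] //= lt_it; rewrite IHt ?(path_sorted sorted_at).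
have -> : count (>= c) t = 0%N.
  apply/eqP; rewrite -leqn0 leqNgt -has_count; apply/hasPn => b bt.
  by rewrite -ltNge (le_lt_trans (le_a b bt)).
apply/negbTE; rewrite -ltNge; apply: le_lt_trans lt_ac.
by case: i lt_it => [|i] //= lt_it; apply/le_a/mem_nth.
Qed.

Lemma le_genmax (R : realType) (c : R) r (s : seq R) : (1 <= r)%N -> (r <= size s)%N ->
  (c <= genmax r s) = (r <= count (>= c) s)%N.
Proof.
move=> r_gt0 le_rs; rewrite /genmax le_nth_sorted_ge ?count_sort ?prednK //.
- by apply: sort_sorted => a b; exact: le_total.
- by rewrite size_sort.
Qed.

Section scalable_classifier.
Variable R : realType.

Lemma limNy_lt0_nondecreasing (g : R -> R) : {homo g : a b / a <= b} ->
  (lim ((g rho)%:E @[rho --> -oo%R]) < 0)%E -> exists a, g a < 0.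
Proof.
move=> g_nd; apply: contraPP => /forallNP g_ge0.
have g_cvg : cvg ((g rho)%:E @[rho --> -oo%R]).
  apply/cvg_ex; exists (ereal_inf (range (fun rho => (g (- rho))%:E))).
  by apply/cvgNy_compNP/nonincreasing_cvge => a b le_ab; rewrite lee_fin g_nd // lerN2.
apply/negP; rewrite -leNgt; apply: lime_ge g_cvg _; apply: nearW => rho.
by rewrite lee_fin leNgt; apply/negP/g_ge0.
Qed.

Lemma limy_gt0_nondecreasing (g : R -> R) : {homo g : a b / a <= b} ->
  (0 < lim ((g rho)%:E @[rho --> +oo%R]))%E -> exists b, 0 < g b.
Proof.
move=> g_nd; apply: contraPP => /forallNP g_le0.
have g_cvg : cvg ((g rho)%:E @[rho --> +oo%R]).
  apply/cvg_ex; exists (ereal_sup (range (fun rho => (g rho)%:E))).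
  by apply: nondecreasing_cvge => a b le_ab; rewrite lee_fin g_nd.
apply/negP; rewrite -leNgt; apply: lime_le g_cvg _; apply: nearW => rho.
by rewrite lee_fin leNgt; apply/negP/g_le0.
Qed.

Variables (X : Type) (g : X -> R -> R).
Hypothesis g_scalable : scalable_classifier g.

Lemma scalable_classifier_root x : exists rho, g x rho = 0.
Proof.
have [g_cont [g_incr [lim_Ny lim_y]]] := g_scalable x.
have g_nd := ltW_homo g_incr.
have [a ga_lt0] := limNy_lt0_nondecreasing g_nd lim_Ny.
have [b gb_gt0] := limy_gt0_nondecreasing g_nd lim_y.
have le_ab : a <= b by rewrite leNgt; apply/negP => /g_incr; lra.
have [|rho _ grho] := @IVT R (g x) a b 0 le_ab (continuous_subspaceT g_cont).
  by rewrite ge_min le_max (ltW ga_lt0) (ltW gb_gt0) orbT.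
by exists rho.
Qed.

Lemma scalable_classifier_lt0 x rho : (g x rho < 0) = (rho < rhobar g x).
Proof.
have [_ [g_incr _]] := g_scalable x.
have root : g x (rhobar g x) = 0 by exact: xgetPex (scalable_classifier_root x).
by rewrite -[in LHS]root (leW_mono (le_mono g_incr)).
Qed.

End scalable_classifier.

Section monotone_measure_limits.
Context d (T : measurableType d) (R : realType) (mu : {measure set T -> \bar R}).
Variable F : (set T)^nat.
Hypothesis mF : forall n, measurable (F n).

Lemma nondecreasing_bigcup_measure_le (a : \bar R) :
  {homo F : n m / (n <= m)%N >-> (n <= m)%O} -> (forall n, (mu (F n) <= a)%E) ->
  (mu (\bigcup_n F n) <= a)%E.
Proof.
move=> F_nd le_muF_a.
have mu_cvg := nondecreasing_cvg_mu (mu:=mu) mF (bigcupT_measurable F mF) F_nd.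
by rewrite -(cvg_lim _ mu_cvg) //; apply: lime_le; [exact: cvgP mu_cvg|exact: nearW].
Qed.

Lemma nonincreasing_bigcap_measure_ge (a : \bar R) : (mu (F 0%N) < +oo)%E ->
  {homo F : n m / (n <= m)%N >-> (m <= n)%O} -> (forall n, (a <= mu (F n))%E) ->
  (a <= mu (\bigcap_n F n))%E.
Proof.
move=> muF0_fin F_ni le_a_muF.
have mu_cvg := nonincreasing_cvg_mu (mu:=mu) muF0_fin mF (bigcapT_measurable mF) F_ni.
by rewrite -(cvg_lim _ mu_cvg) //; apply: lime_ge; [exact: cvgP mu_cvg|exact: nearW].
Qed.

End monotone_measure_limits.

Definition superlevel (T : Type) (R : numDomainType) (D : set T) (h : T -> R) (rho : R) :=
  D `&` [set t | rho < h t].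

Section superlevel_sets.
Context (T : Type) (R : realType) (D : set T) (h : T -> R).
Local Notation S := (superlevel D h).

Lemma superlevel_anti : {homo S : a b / a <= b >-> (b <= a)%O}.
Proof.
by move=> a b le_ab; apply/subsetPset => t [Dt lt_bh]; split=> //; exact: le_lt_trans lt_bh.
Qed.

Lemma bigcup_superlevelN : \bigcup_n S (- n%:R) = D.
Proof.
apply/seteqP; split=> [t [n _ []] //|t Dt].
exists (Num.Def.archi_bound `|h t|) => //; split=> //.
rewrite /= ltrNl (le_lt_trans _ (archi_boundP (normr_ge0 _))) //.
by rewrite -normrN ler_norm.
Qed.

Lemma bigcap_superlevel_nat : \bigcap_n S n%:R = set0.
Proof.
apply/seteqP; split=> // t /(_ (Num.Def.archi_bound `|h t|) I) [_].
by move/lt_le_trans/(_ (ler_norm _)); rewrite ltNge (ltW (archi_boundP (normr_ge0 _))).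
Qed.

Lemma bigcup_superlevel_right c : \bigcup_n S (c + n.+1%:R^-1) = S c.
Proof.
apply/seteqP; split=> t.
  by case=> n _ [Dt lt_h]; split=> //; apply: lt_trans lt_h; rewrite ltrDl invr_gt0.
by case=> Dt /= /ltr_add_invr [n lt_h]; exists n.
Qed.

Lemma bigcap_superlevel_left c :
  \bigcap_n S (c - n.+1%:R^-1) = D `&` [set t | c <= h t].
Proof.
apply/seteqP; split=> t.
  move=> St; split; first by have [] := St 0%N I.
  rewrite /= leNgt; apply/negP => /ltr_add_invr [n lt_h].
  by have [_ /=] := St n I; rewrite ltrBlDr ltNge (ltW lt_h).
case=> Dt le_ch n _; split=> //; apply: lt_le_trans le_ch.
by rewrite ltrBlDr ltrDl invr_gt0.
Qed.

End superlevel_sets.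

Lemma invSn_anti (R : numFieldType) :
  {homo (fun n : nat => n.+1%:R^-1 : R) : m n / (m <= n)%N >-> n <= m}.
Proof. by move=> m n le_mn; rewrite lef_pV2 ?posrE ?ltr0Sn // ler_nat ltnS. Qed.

Section superlevel_quantile.
Context d (T : measurableType d) (R : realType) (P : probability T R).
Context (D : set T) (h : T -> R).
Local Notation S := (superlevel D h).
Hypothesis mS : forall rho, measurable (S rho).

Lemma measurable_superlevel_closed c : measurable (D `&` [set t | c <= h t]).
Proof. by rewrite -(bigcap_superlevel_left D h); exact: bigcapT_measurable. Qed.

Lemma le_measure_superlevel a b : a <= b -> (P (S b) <= P (S a))%E.
Proof. by move=> le_ab; apply: le_measure; rewrite ?inE //; exact/subsetPset/superlevel_anti. Qed.

Variable e : R.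

Lemma measure_superlevel_le_dom :
  (forall rho, P (S rho) <= e%:E)%E -> (P D <= e%:E)%E.
Proof.
move=> le_e; rewrite -(bigcup_superlevelN D h).
apply: nondecreasing_bigcup_measure_le => [//|m n le_mn|n]; last exact: le_e.
by apply: superlevel_anti; rewrite lerN2 ler_nat.
Qed.

Lemma exists_superlevel_measure_le : 0 < e -> exists rho, (P (S rho) <= e%:E)%E.
Proof.
move=> e_gt0; apply: contrapT => /forallNP lt_e.
have : (e%:E <= P (\bigcap_n S n%:R))%E.
  apply: nonincreasing_bigcap_measure_ge => [//||m n le_mn|n].
  - by rewrite (le_lt_trans (probability_le1 _ _)) ?ltry.
  - by apply: superlevel_anti; rewrite ler_nat.
  - by rewrite ltW // ltNge; apply/negP/lt_e.
by rewrite bigcap_superlevel_nat measure0 lee_fin leNgt e_gt0.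
Qed.

Lemma measure_superlevel_right_le c :
  (forall rho, c < rho -> (P (S rho) <= e%:E)%E) -> (P (S c) <= e%:E)%E.
Proof.
move=> le_e; rewrite -(bigcup_superlevel_right D h).
apply: nondecreasing_bigcup_measure_le => [//|m n le_mn|n].
  by apply: superlevel_anti; rewrite lerD2l invSn_anti.
by apply: le_e; rewrite ltrDl invr_gt0.
Qed.

Lemma measure_superlevel_left_ge c :
  (forall rho, rho < c -> (e%:E <= P (S rho))%E) ->
  (e%:E <= P (D `&` [set t | (c <= h t)%R]))%E.
Proof.
move=> ge_e; rewrite -(bigcap_superlevel_left D h).
apply: nonincreasing_bigcap_measure_ge => [//||m n le_mn|n].
- by rewrite (le_lt_trans (probability_le1 _ _)) ?ltry.
- by apply: superlevel_anti; rewrite lerD2l lerN2 invSn_anti.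
- by apply: ge_e; rewrite ltrBlDr ltrDl invr_gt0.
Qed.

(* [c] is the supremum of the thresholds whose superlevel set still has mass above [e];
   the measure of [S rho] is right-continuous in [rho], so the supremum is attained. *)
Lemma superlevel_quantile : 0 < e -> (e%:E < P D)%E ->
  exists c, forall rho, (P (S rho) <= e%:E)%E = (c <= rho).
Proof.
move=> e_gt0 lt_e_PD.
pose A := [set rho | (e%:E < P (S rho))%E].
have [rho0 A_rho0] : exists rho0, A rho0.
  apply: contrapT => /forallNP le_e; move: lt_e_PD; rewrite ltNge measure_superlevel_le_dom //.
  by move=> rho; rewrite leNgt; apply/negP/le_e.
have [rho1 le_e_rho1] := exists_superlevel_measure_le e_gt0.
have A_ub rho : A rho -> rho <= rho1.
  move=> A_rho; rewrite leNgt; apply/negP => /ltW/le_measure_superlevel le_rho.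
  by move: A_rho; rewrite /A /= ltNge (le_trans le_rho le_e_rho1).
have supA : has_sup A by split; [exists rho0 | exists rho1].
have above rho : sup A < rho -> (P (S rho) <= e%:E)%E.
  move=> lt_sup; rewrite leNgt; apply/negP => A_rho.
  by move: lt_sup; rewrite ltNge sup_upper_bound.
exists (sup A) => rho; apply/idP/idP => [le_e|].
  rewrite leNgt; apply/negP; rewrite -subr_gt0 => lt_rho.
  have [t A_t] := sup_adherent (lt_rho : 0 < sup A - rho) supA.
  rewrite opprB addrCA subrr addr0 => /ltW/le_measure_superlevel le_t.
  by move: A_t; rewrite /A /= ltNge (le_trans le_t le_e).
rewrite le_eqVlt => /orP[/eqP <-|]; last exact: above.
exact: measure_superlevel_right_le.
Qed.

End superlevel_quantile.

Section iid_hits.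
Context (R : realType) (dO dZ : measure_display) (Omega : measurableType dO).
Context (Zt : measurableType dZ) (Q : probability Omega R) (P : probability Zt R).
Context (n : nat) (Z : 'I_n -> Omega -> Zt) (E : set Zt).
Hypothesis iidZ : iid_with_law Q P Z.
Hypothesis mE : measurable E.

Local Notation hits w := [set j : 'I_n | Z j w \in E]%SET.
Local Notation p := (fine (P E)).

Let hit_or_miss (J : {set 'I_n}) i := if i \in J then E else ~` E.

Let measurable_hit_or_miss J i : measurable (hit_or_miss J i).
Proof. by rewrite /hit_or_miss; case: ifP => _ //; exact: measurableC. Qed.

Lemma hits_eq_bigcap J :
  [set w | hits w = J] = \bigcap_(i in [set: 'I_n]) Z i @^-1` hit_or_miss J i.
Proof.
apply/seteqP; split=> w /=.
  move=> <- i _; rewrite /hit_or_miss inE /=; case: ifP => [/set_mem //|].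
  by move=> notE Ei; rewrite (mem_set Ei) in notE.
move=> Zw; apply/setP => i; rewrite inE.
have := Zw i Logic.I; rewrite /hit_or_miss; case: ifP => [_ /mem_set //|_ notE].
by apply/negbTE/negP => /set_mem.
Qed.

Lemma measurable_hits_eq J : measurable [set w | hits w = J].
Proof.
have [mZ _] := iidZ.
rewrite hits_eq_bigcap; apply: fin_bigcap_measurable; first exact: finite_finset.
by move=> i _; rewrite -[_ @^-1` _]setTI; exact: mZ.
Qed.

Lemma prob_hits_eq J : Q [set w | hits w = J] = (p ^+ #|J| * (1 - p) ^+ (n - #|J|))%:E.
Proof.
have [_ [lawZ indepZ]] := iidZ.
have PE : P E = p%:E by rewrite fineK // fin_num_measure.
rewrite hits_eq_bigcap indepZ //.
rewrite (eq_bigr (fun i => (if i \in J then p else 1 - p)%:E)); last first.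
  by move=> i _; rewrite lawZ // /hit_or_miss; case: ifP => _; rewrite ?probability_setC // PE.
rewrite prodEFin (bigID (mem J)) /= (eq_bigr (fun _ => p)) => [|i ->] //.
rewrite [X in _ * X](eq_bigr (fun _ => 1 - p)) => [|i /negbTE ->] //.
rewrite !prodr_const; congr (_ * _ ^+ _)%:E.
transitivity #|~: J|; last by rewrite cardsCs finset.setCK card_ord.
by rewrite -cardsE; congr #|_|; apply/setP => i; rewrite !inE.
Qed.

Lemma card_hits_ltE k : [set w | (#|hits w| < k)%N] =
  \bigcup_(J in [set: {set 'I_n}]) if (#|J| < k)%N then [set w | hits w = J] else set0.
Proof.
apply/seteqP; split=> w /=; first by move=> lt_k; exists (hits w) => //; rewrite lt_k.
by case=> J _; case: ifP => // lt_k /= ->.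
Qed.

Lemma measurable_card_hits_lt k : measurable [set w | (#|hits w| < k)%N].
Proof.
rewrite card_hits_ltE; apply: fin_bigcup_measurable; first exact: finite_finset.
by move=> J _; case: ifP => _ //; exact: measurable_hits_eq.
Qed.

Lemma prob_card_hits_lt k : Q [set w | (#|hits w| < k)%N] = (binom_lt p n k)%:E.
Proof.
rewrite card_hits_ltE measure_fin_bigcup //; first last.
- by move=> J _; case: ifP => // _; exact: measurable_hits_eq.
- by move=> J K _ _ [w []]; do 2!case: ifP => // _; move=> /= -> ->.
- exact: finite_finset.
rewrite (fsbigE (enum {set 'I_n})) ?enum_uniq //; last by move=> J _; rewrite mem_enum.
rewrite big_enum_cond /= big_mkcond /= -sum_card_lt_binom -sumEFin [in RHS]big_mkcond /=.
by apply: eq_bigr => J _; rewrite in_setT; case: ifP; rewrite ?prob_hits_eq ?measure0.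
Qed.

End iid_hits.

Section negative_risk.
Context (R : realType) (dX : measure_display) (X : measurableType dX).
Context (g : X -> R -> R) (P : probability (X * bool)%type R) (r n : nat).
Hypothesis g_scalable : scalable_classifier g.
Hypothesis g_measurable : forall rho, measurable_fun setT (fun x => g x rho).

Local Notation neg := [set xy : X * bool | xy.2 = false].
Local Notation score := (fun xy : X * bool => rhobar g xy.1).
Local Notation risk z := (P [set xy | xy.2 = false /\ S_eps g r z xy.1]).

Lemma measurable_neg : measurable neg.
Proof.
have m_false : measurable [set false] by [].
by have := measurable_snd (T1:=X) measurableT _ m_false; rewrite setTI.
Qed.

Lemma measurable_neg_superlevel rho : measurable (superlevel neg score rho).
Proof.
have -> : superlevel neg score rho = neg `&` (fun xy => g xy.1 rho) @^-1` `]-oo, 0[.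
  by apply/seteqP; split=> xy /=; rewrite in_itv /= scalable_classifier_lt0.
have g_rho_measurable : measurable_fun setT (fun xy : X * bool => g xy.1 rho).
  exact: measurableT_comp (g_measurable rho) measurable_fst.
apply: measurableI; first exact: measurable_neg.
by rewrite -[_ @^-1` _]setTI; exact: g_rho_measurable (measurable_itv _).
Qed.

Lemma neg_S_epsE (z : 'I_n -> X * bool) :
  [set xy | xy.2 = false /\ S_eps g r z xy.1] =
  if (r <= size (neg_features z))%N
  then superlevel neg score (genmax r [seq rhobar g x | x <- neg_features z])
  else neg.
Proof.
rewrite /S_eps /=; case: ifP => _; apply/seteqP; split=> xy /=.
- by case=> neg_xy; rewrite scalable_classifier_lt0.
- by case=> neg_xy /=; rewrite -scalable_classifier_lt0.
- by case.
- by [].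
Qed.

Lemma le_measure_neg_superlevel rho : (P (superlevel neg score rho) <= P neg)%E.
Proof.
apply: le_measure; last by move=> xy [].
- by rewrite inE; exact: measurable_neg_superlevel.
- by rewrite inE; exact: measurable_neg.
Qed.

Lemma le_risk_neg (z : 'I_n -> X * bool) : (risk z <= P neg)%E.
Proof. by rewrite neg_S_epsE; case: ifP => _ //; exact: le_measure_neg_superlevel. Qed.

Lemma count_neg_features_ge (z : 'I_n -> X * bool) c :
  count (>= c) [seq rhobar g x | x <- neg_features z] =
  #|[set j | z j \in neg `&` [set xy | c <= score xy]]%SET|.
Proof.
rewrite /neg_features !count_map count_filter cardsE cardE /enum_mem size_filter count_filter.
apply: eq_count => i /=; rewrite unfold_in /= andbT.
by apply/idP/asboolP => [/andP[le_c /negbTE neg_i]|[neg_i ->]] //; rewrite neg_i.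
Qed.

Lemma risk_le_iff (eps c : R) (z : 'I_n -> X * bool) : (1 <= r)%N ->
  (forall rho, (P (superlevel neg score rho) <= eps%:E)%E = (c <= rho)) ->
  (risk z <= eps%:E)%E =
  (r <= #|[set j | z j \in neg `&` [set xy | (c <= score xy)%R]]%SET|)%N.
Proof.
move=> r_gt0 quantile; rewrite neg_S_epsE -count_neg_features_ge.
case: ifP => le_r_size.
  by rewrite quantile le_genmax // size_map.
apply/idP/idP => [|le_r_count]; last first.
  by have := leq_trans le_r_count (count_size _ _); rewrite size_map le_r_size.
apply: contraLR => _; rewrite -ltNge.
apply: lt_le_trans (le_measure_neg_superlevel (c - 1)).
by rewrite ltNge quantile -ltNge ltrBlDr ltrDl ltr01.
Qed.

End negative_risk.

Theorem theorem2 (R : realType) (dX dO : measure_display)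
  (X : measurableType dX) (Omega : measurableType dO)
  (P : probability (X * bool)%type R) (m : nat) (f : 'I_m -> X -> R -> R)
  (eps : R) (r nc : nat) (Q : probability Omega R)
  (Z : 'I_nc -> Omega -> (X * bool)%type) :
  (forall k, scalable_classifier (f k)) ->
  (forall k rho, measurable_fun setT (fun x => f k x rho)) ->
  0 < eps < 1 ->
  (1 <= r)%N -> (r <= nc)%N ->
  iid_with_law Q P Z ->
  forall k : 'I_m,
    ((1 - m%:R * binomCDF r.-1 nc eps)%:E <=
     Q [set w | P [set xy | xy.2 = false /\ S_eps (f k) r (fun i => Z i w) xy.1]
                <= eps%:E])%E.
Proof.
move=> f_scalable f_measurable /andP[eps_gt0 eps_lt1] r_gt0 le_r_nc iidZ k.
have mS := measurable_neg_superlevel (f_scalable k) (f_measurable k).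
have binom_ge0 : 0 <= binom_lt eps nc r.
  by apply: sumr_ge0 => i _; rewrite binom_pmf_ge0 // !ltW.
have le_binom_m : binom_lt eps nc r <= m%:R * binom_lt eps nc r.
  by rewrite ler_peMl // ler1n (leq_ltn_trans _ (ltn_ord k)).
rewrite binomCDF_binom_lt prednK //.
have [le_Pneg_eps|lt_eps_Pneg] := leP (P [set xy | xy.2 = false]) eps%:E.
  rewrite (_ : [set w | _] = setT) ?probability_setT ?lee_fin; first lra.
  apply/seteqP; split=> // w _ /=.
  exact: le_trans (le_risk_neg P r (f_scalable k) (f_measurable k) _) le_Pneg_eps.
have [c quantile] := superlevel_quantile mS eps_gt0 lt_eps_Pneg.
pose E := [set xy : X * bool | xy.2 = false] `&` [set xy | c <= rhobar (f k) xy.1].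
have mE : measurable E := measurable_superlevel_closed mS c.
have le_eps_PE : (eps%:E <= P E)%E.
  apply: (measure_superlevel_left_ge mS) => rho lt_rho_c.
  by rewrite ltW // ltNge quantile -ltNge.
rewrite (_ : [set w | _] = ~` [set w | #|[set j | Z j w \in E]%SET| < r]%N); last first.
  apply/seteqP; split=> w /=; rewrite (risk_le_iff _ _ _ _ quantile) // -/E.
    by rewrite leqNgt => /negP.
  by move/negP; rewrite -leqNgt.
rewrite (probability_setC Q (measurable_card_hits_lt iidZ mE r)).
rewrite (prob_card_hits_lt iidZ mE r) -EFinB lee_fin.
have PE_le1 : fine (P E) <= 1 by rewrite -lee_fin fineK ?fin_num_measure ?probability_le1.
have le_eps_p : eps <= fine (P E) by rewrite -lee_fin fineK ?fin_num_measure.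
have := binom_lt_anti nc r (ltW eps_gt0) le_eps_p PE_le1; lra.
Qed.
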